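(* Let $P$ be a $K\times K$ substochastic matrix with $\rho(P)<1$, and let $\mu,\lambda,N\in\mathbb{R}_+^K$. Consider the linear network $\mathbf{N}^{(i)}(t)=N^{(i)}+\lambda^{(i)}t$, $\mathbf{S}^{(i)}(t)=\mu^{(i)}t$, $\mathbf{P}^{(i,j)}(t)=P^{(i,j)}t$. Then the fixed point equation $\mathbf{A}=\Gamma(\mathbf{D},\mathbf{P},\mathbf{N})$, $\mathbf{D}=\Phi(\mathbf{A},\mathbf{S})$ has a unique solution $(\mathbf{A},\mathbf{D})\in\mathbb{D}(\mathbb{R}_+^K)\times\mathbb{D}_0(\mathbb{R}_+^K)$, given by $\mathbf{A}(t)=x(\mu t,P,N+\lambda t)$ and $\mathbf{D}^{(i)}(t)=\mathbf{A}^{(i)}(t)\wedge\mu^{(i)}t$.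
   Context: $\mathbb{D}(\mathbb{R}_+^K)$: càdlàg componentwise non-decreasing functions $\mathbb{R}_+\to\mathbb{R}_+^K$; $\mathbb{D}_0$: those vanishing at $0$. $\rho$ denotes the spectral radius. For $X\in\mathbb{D}_0(\mathbb{R}_+^K)$, $\mathbf{P}=(\mathbf{P}^{(i,j)})$ with $\mathbf{P}^{(i,j)}\in\mathbb{D}_0(\mathbb{R}_+)$, and $\mathbf{N}\in\mathbb{D}(\mathbb{R}_+^K)$: $\Gamma(X,\mathbf{P},\mathbf{N})^{(i)}(t)=\mathbf{N}^{(i)}(t)+\sum_{j=1}^K\mathbf{P}^{(j,i)}(X^{(j)}(t))$. For $X\in\mathbb{D}(\mathbb{R}_+^K)$, $Y\in\mathbb{D}_0(\mathbb{R}_+^K)$: $\Phi(X,Y)^{(i)}(t)=\inf_{0\le s\le t}\{Y^{(i)}(t)-Y^{(i)}(s)+X^{(i)}(s)\}\wedge Y^{(i)}(t)$. For a substochastic $P$ with $\rho(P)<1$ and $(\alpha,y)\in\mathbb{R}_+^{2K}$, $x(y,P,\alpha)\in\mathbb{R}_+^K$ denotes the unique solution of $x^{(i)}=\alpha^{(i)}+\sum_{j=1}^KP^{(j,i)}(x^{(j)}\wedge y^{(j)})$, $1\le i\le K$ (this solution exists, is unique, and is continuous and non-decreasing in $(y,\alpha)$). Here $\mu t$ denotes the vector $(\mu^{(i)}t)_i$. *)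

From Stdlib Require Import Reals.
From mathcomp Require Import all_boot all_order all_algebra.
From mathcomp Require Import all_classical all_reals all_analysis.
From mathcomp Require Import Rstruct Rstruct_topology.
From mathcomp.real_closed Require Import complex.

Set Implicit Arguments.
Unset Strict Implicit.
Unset Printing Implicit Defensive.

Import Order.TTheory GRing.Theory Num.Theory.
Local Open Scope classical_set_scope.
Local Open Scope ring_scope.

Definition substochastic (K : nat) (P : 'M[R]_K) : Prop :=
  (forall i j, 0 <= P i j) /\ (forall i, \sum_(j < K) P i j <= 1).

(* spectral radius: largest modulus of a complex eigenvalue
   (complex root of the characteristic polynomial); 0 if K = 0. *)
Definition spectral_radius (K : nat) (P : 'M[R]_K) : R :=
  sup [set Normc.normc z | z in
        [set z : R[i] | root (char_poly (map_mx (real_complex R) P)) z]].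

(* Paths are functions R -> R; only their restriction to R_+ matters. *)
Definition cadlag_Rp (f : R -> R) : Prop :=
  forall t : R, 0 <= t ->
    (f x @[x --> t^'+] --> f t) /\ (0 < t -> cvg (f x @[x --> t^'-])).

Definition nondecr_Rp (f : R -> R) : Prop :=
  forall s t : R, 0 <= s -> s <= t -> f s <= f t.

Definition nonneg_Rp (f : R -> R) : Prop := forall t : R, 0 <= t -> 0 <= f t.

Definition Dspace (K : nat) (X : 'I_K -> R -> R) : Prop :=
  forall i, [/\ nonneg_Rp (X i), nondecr_Rp (X i) & cadlag_Rp (X i)].

Definition D0space (K : nat) (X : 'I_K -> R -> R) : Prop :=
  Dspace X /\ forall i, X i 0 = 0.

Definition Gamma (K : nat) (X : 'I_K -> R -> R) (Pf : 'I_K -> 'I_K -> R -> R)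
  (Nf : 'I_K -> R -> R) : 'I_K -> R -> R :=
  fun i t => Nf i t + \sum_(j < K) Pf j i (X j t).

Definition Phi (K : nat) (X Y : 'I_K -> R -> R) : 'I_K -> R -> R :=
  fun i t => Num.min
    (inf [set Y i t - Y i s + X i s | s in [set s : R | 0 <= s <= t]])
    (Y i t).

Definition x_eqn (K : nat) (y : 'I_K -> R) (P : 'M[R]_K) (alpha : 'I_K -> R)
  (x : 'I_K -> R) : Prop :=
  (forall i, 0 <= x i) /\
  (forall i, x i = alpha i + \sum_(j < K) P j i * Num.min (x j) (y j)).

(* x(y, P, alpha): the (unique, when rho(P) < 1) solution of x_eqn *)
Definition xsol (K : nat) (y : 'I_K -> R) (P : 'M[R]_K) (alpha : 'I_K -> R)
  : 'I_K -> R := get [set x | x_eqn y P alpha x].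

From Stdlib Require Import Reals.
From mathcomp Require Import all_boot all_order all_algebra.
From mathcomp Require Import all_classical all_reals all_analysis.
From mathcomp Require Import Rstruct Rstruct_topology.
From mathcomp.real_closed Require Import complex.
From mathcomp Require Import ring lra.
Import Order.TTheory GRing.Theory Num.Theory.

Set Implicit Arguments.
Unset Strict Implicit.
Unset Printing Implicit Defensive.
Local Open Scope classical_set_scope.
Local Open Scope ring_scope.

(* The equation x = a + P^T (x /\ y) has a nonnegative solution by Knaster-Tarski,
   and it obeys a comparison principle: for a subsolution x and a solution x' with
   larger data, u = (x - x')^+ satisfies u <= P^T u, and a nonnegative P-subinvariant
   vector vanishes when P is substochastic with rho(P) < 1.  Comparison shows that
   x(t) = x(mu t, P, N + lambda t) is nondecreasing and that x(t)/t is nonincreasing.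
   The latter collapses the Skorokhod map of the linear service process to a
   pointwise minimum, so (x, x /\ mu t) solves the fixed point equation, and it also
   gives right continuity.  For uniqueness, the sup-distances on [0, T] between the
   departures of a solution and of this candidate form a P-subinvariant vector,
   because Gamma and Phi are Lipschitz; hence they vanish. *)

Lemma normc_ge0 (z : R[i]) : 0 <= Normc.normc z.
Proof. by case: z => a b; rewrite /Normc.normc sqrtr_ge0. Qed.

Lemma normc_root_le_spectral_radius K (P : 'M[R]_K) (z : R[i]) :
  root (char_poly (map_mx (real_complex R) P)) z ->
  Normc.normc z <= spectral_radius P.
Proof.
set p := char_poly _ => pz.
have [rs def_p] := closed_field_poly_normal p.
have lc_p : lead_coef p != 0 by rewrite (monicP (char_poly_monic _)) oner_neq0.
have roots_rs w : root p w -> w \in rs.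
  by rewrite def_p rootZ // root_prod_XsubC.
apply: sup_upper_bound; last by exists z.
split; first by exists (Normc.normc z), z.
exists (\big[Num.max/0]_(w <- rs) Normc.normc w) => _ [w /= pw <-].
exact: le_bigmax_seq (roots_rs w pw) _.
Qed.

Lemma fixed_vector_eq0 K (P : 'M[R]_K) (u : 'I_K -> R) :
  spectral_radius P < 1 -> (forall i, u i = \sum_j P j i * u j) -> u = 0.
Proof.
move=> rhoP1 uP; apply/funext => i; apply/eqP/negPn/negP => ui0.
have : 1 <= spectral_radius P; last by rewrite leNgt rhoP1.
rewrite -Normc.normc1; apply: normc_root_le_spectral_radius.
rewrite -eigenvalue_root_char; apply/eigenvalueP.
exists (\row_j real_complex R (u j)).
  apply/rowP => j; rewrite !mxE mul1r (uP j) rmorph_sum.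
  by apply: eq_bigr => k _; rewrite !mxE rmorphM mulrC.
apply/negP => /eqP/rowP/(_ i); rewrite !mxE => ui0C.
by move/eqP: ui0; apply; apply: (@complexI R); rewrite ui0C rmorph0.
Qed.

Lemma subinvariant_eq0 K (P : 'M[R]_K) (u : 'I_K -> R) :
  substochastic P -> spectral_radius P < 1 -> (forall i, 0 <= u i) ->
  (forall i, u i <= \sum_j P j i * u j) -> u = 0.
Proof.
move=> [P_ge0 P_rows] rhoP1 u_ge0 uP; apply: (fixed_vector_eq0 rhoP1) => i.
pose d k := \sum_j P j k * u j - u k.
have d_ge0 k : 0 <= d k by rewrite subr_ge0.
(* the row sums of P are at most 1 *)
have sum_d_le0 : \sum_k d k <= 0.
  rewrite sumrB subr_le0 exchange_big /=; apply: ler_sum => j _.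
  by rewrite -mulr_suml ler_piMl.
have /psumr_eq0P d0 : \sum_k d k = 0 by apply/le_anti; rewrite sum_d_le0 sumr_ge0.
by apply/eqP; rewrite eq_sym -subr_eq0 -/(d i) d0.
Qed.

Lemma min_subr_le (a b c d : R) : c <= d ->
  Num.min a c - Num.min b d <= Num.max (a - b) 0.
Proof.
move=> cd; have [bd|db] := leP b d.
  by rewrite le_max lerD2r ge_min lexx.
by rewrite le_max subr_le0 ge_min cd !orbT.
Qed.

Lemma x_eqn_sub_le K (P : 'M[R]_K) (a a' y y' x x' : 'I_K -> R) :
  substochastic P -> spectral_radius P < 1 ->
  (forall i, a i <= a' i) -> (forall i, y i <= y' i) ->
  (forall i, x i <= a i + \sum_j P j i * Num.min (x j) (y j)) ->
  (forall i, x' i = a' i + \sum_j P j i * Num.min (x' j) (y' j)) ->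
  forall i, x i <= x' i.
Proof.
move=> Psub rhoP1 aa' yy' x_sub x'_eq i.
have P_ge0 j k : 0 <= P j k by case: Psub.
pose u k := Num.max (x k - x' k) 0.
have u_ge0 k : 0 <= u k by rewrite le_max lexx orbT.
have uP k : u k <= \sum_j P j k * u j.
  rewrite ge_max sumr_ge0 ?andbT; last by move=> j _; rewrite mulr_ge0.
  have step : x k - x' k <=
      \sum_j P j k * (Num.min (x j) (y j) - Num.min (x' j) (y' j)).
    under eq_bigr do rewrite mulrBr; rewrite sumrB.
    by have := x_sub k; have := x'_eq k; have := aa' k; lra.
  by apply: le_trans step (ler_sum _ _) => j _; rewrite ler_wpM2l ?min_subr_le.
have ui0 : u i = 0 by rewrite (subinvariant_eq0 Psub rhoP1 u_ge0 uP).
by rewrite -subr_le0 -ui0 le_max lexx.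
Qed.

Lemma x_eqn_exists K (P : 'M[R]_K) (y a : 'I_K -> R) :
  (forall i j, 0 <= P i j) -> (forall i, 0 <= y i) -> (forall i, 0 <= a i) ->
  exists x, x_eqn y P a x.
Proof.
move=> P_ge0 y_ge0 a_ge0.
pose F (x : 'I_K -> R) i := a i + \sum_j P j i * Num.min (x j) (y j).
have F_mono x x' : (forall i, x i <= x' i) -> forall i, F x i <= F x' i.
  move=> xx' i; rewrite lerD2l; apply: ler_sum => j _; rewrite ler_wpM2l //.
  by rewrite le_min !ge_min xx' lexx orbT.
have F_ge0 x : (forall i, 0 <= x i) -> forall i, 0 <= F x i.
  move=> x_ge0 i; rewrite addr_ge0 // sumr_ge0 // => j _.
  by rewrite mulr_ge0 // le_min x_ge0 y_ge0.
(* Knaster-Tarski: the infimum of the nonnegative supersolutions is a fixed point of F. *)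
pose S := [set x : 'I_K -> R | (forall i, 0 <= x i) /\ (forall i, F x i <= x i)].
pose x0 i := a i + \sum_j P j i * y j.
have S_x0 : S x0.
  have x0_ge0 i : 0 <= x0 i by rewrite addr_ge0 // sumr_ge0 // => j _; rewrite mulr_ge0.
  split=> // i; rewrite lerD2l; apply: ler_sum => j _; rewrite ler_wpM2l //.
  by rewrite ge_min lexx orbT.
pose xs i := inf [set x i | x in S].
have lb_S i : lbound [set x i | x in S] 0 by move=> _ [x [x_ge0 _] <-].
have xs_le x i : S x -> xs i <= x i.
  by move=> Sx; apply: (ge_inf (ex_intro _ 0 (lb_S i))); exists x.
have xs_ge0 i : 0 <= xs i by apply: lb_le_inf => //; exists (x0 i), x0.
have F_xs i : F xs i <= xs i.
  apply: lb_le_inf; first by exists (x0 i), x0.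
  move=> _ [x Sx <-]; have [_ Fx] := Sx.
  exact: le_trans (F_mono _ _ (xs_le x ^~ Sx) i) (Fx i).
have S_Fxs : S (F xs) by split; [exact: F_ge0 | exact: F_mono].
exists xs; split=> // i; apply/le_anti; rewrite F_xs andbT.
exact: xs_le S_Fxs.
Qed.

Lemma xsolP K (P : 'M[R]_K) (y a : 'I_K -> R) : substochastic P ->
  (forall i, 0 <= y i) -> (forall i, 0 <= a i) -> x_eqn y P a (xsol y P a).
Proof. by move=> [P_ge0 _] y_ge0 a_ge0; apply: getPex; exact: x_eqn_exists. Qed.

Lemma dist_minr_le (a b c : R) : `|Num.min a c - Num.min b c| <= `|a - b|.
Proof.
have := ler_norm (a - b); have := ler_norm (b - a); rewrite distrC.
by rewrite ler_norml; have [ac|ca] := leP a c; have [bc|cb] := leP b c; lra.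
Qed.

Lemma min_le_addr (a b a' b' u v : R) : a' <= a + u -> b' <= b + v ->
  Num.min a' b' <= Num.min a b + Num.max u v.
Proof. by have [] := leP a b; have [] := leP u v; have [] := leP a' b'; lra. Qed.

Lemma dist_inf_le (I : set R) (g1 g2 : R -> R) (c : R) : I !=set0 ->
  (forall r, I r -> 0 <= g1 r) -> (forall r, I r -> 0 <= g2 r) ->
  (forall r, I r -> `|g1 r - g2 r| <= c) ->
  `|inf (g1 @` I) - inf (g2 @` I)| <= c.
Proof.
move=> [r0 Ir0] g1_ge0 g2_ge0 g12.
have inf_le g : (forall r, I r -> 0 <= g r) -> forall r, I r -> inf (g @` I) <= g r.
  by move=> g_ge0 r Ir; apply: ge_inf; [exists 0 => _ [s Is <-]; exact: g_ge0|exists r].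
have inf_ge g g' : (forall r, I r -> g' r - c <= g r) ->
    (forall r, I r -> 0 <= g' r) -> inf (g' @` I) - c <= inf (g @` I).
  move=> gg' g'_ge0; apply: lb_le_inf; first by exists (g r0), r0.
  by move=> _ [r Ir <-]; apply: le_trans (gg' r Ir); rewrite lerD2r inf_le.
have k1 : inf (g2 @` I) - c <= inf (g1 @` I).
  by apply: inf_ge g2_ge0 => r /g12; rewrite ler_norml => /andP[]; lra.
have k2 : inf (g1 @` I) - c <= inf (g2 @` I).
  by apply: inf_ge g1_ge0 => r /g12; rewrite ler_norml => /andP[]; lra.
by rewrite ler_norml; apply/andP; split; lra.
Qed.

Lemma dist_Gamma_linear_le K (P : 'M[R]_K) (D1 D2 Nf : 'I_K -> R -> R)
    (c : 'I_K -> R) i t :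
  (forall j k, 0 <= P j k) -> (forall j, `|D1 j t - D2 j t| <= c j) ->
  `|Gamma D1 (fun i j t => P i j * t) Nf i t - Gamma D2 (fun i j t => P i j * t) Nf i t|
    <= \sum_j P j i * c j.
Proof.
move=> P_ge0 D12; rewrite /Gamma opprD addrACA subrr add0r -sumrB.
apply: le_trans (ler_norm_sum _ _ _) _; apply: ler_sum => j _.
by rewrite -mulrBr normrM ger0_norm // ler_wpM2l.
Qed.

Lemma dist_Phi_le K (X1 X2 Y : 'I_K -> R -> R) i t c : 0 <= t ->
  (forall s, 0 <= s <= t -> Y i s <= Y i t) ->
  (forall s, 0 <= s <= t -> 0 <= X1 i s) ->
  (forall s, 0 <= s <= t -> 0 <= X2 i s) ->
  (forall s, 0 <= s <= t -> `|X1 i s - X2 i s| <= c) ->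
  `|Phi X1 Y i t - Phi X2 Y i t| <= c.
Proof.
move=> t_ge0 Y_le X1_ge0 X2_ge0 X12.
apply: le_trans (dist_minr_le _ _ _) _; apply: dist_inf_le.
- by exists t; rewrite /= t_ge0 lexx.
- by move=> s st; rewrite addr_ge0 ?subr_ge0 ?Y_le ?X1_ge0.
- by move=> s st; rewrite addr_ge0 ?subr_ge0 ?Y_le ?X2_ge0.
- by move=> s st; rewrite opprD addrACA subrr add0r X12.
Qed.

Lemma Phi_linear_service K (A : 'I_K -> R -> R) (mu : 'I_K -> R) i t :
  0 <= mu i -> 0 <= t -> (forall s, 0 <= s <= t -> 0 <= A i s) ->
  (forall s, 0 < s <= t -> s * A i t <= t * A i s) ->
  Phi A (fun i t => mu i * t) i t = Num.min (A i t) (mu i * t).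
Proof.
move=> mu_ge0 t_ge0 A_ge0 A_sublin; rewrite /Phi.
set E := [set _ | s in _].
have E_At : E (A i t) by exists t; [rewrite /= t_ge0 lexx | rewrite subrr add0r].
have E_lb : lbound E 0.
  move=> _ [s /andP[s_ge0 st] <-]; rewrite -mulrBr addr_ge0 ?A_ge0 ?s_ge0 //.
  by rewrite mulr_ge0 // subr_ge0.
have infE_le : inf E <= A i t by apply: (ge_inf (ex_intro _ 0 E_lb)).
have min_le_E : lbound E (Num.min (A i t) (mu i * t)).
  move=> _ [s /andP[s_ge0 st] <-]; rewrite ge_min.
  have [mus_le|As_lt] := leP (mu i * s) (A i s); first by apply/orP; right; lra.
  have s_gt0 : 0 < s.
    rewrite lt_neqAle s_ge0 andbT; apply: contraTneq As_lt => <-.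
    by rewrite mulr0 -leNgt A_ge0 ?lexx.
  have := A_sublin s; rewrite s_gt0 st => /(_ isT) sublin.
  suff : s * (A i t - A i s) <= s * (mu i * t - mu i * s) by rewrite ler_pM2l // => ?; lra.
  nra.
apply/le_anti/andP; split.
  by rewrite le_min !ge_min infE_le lexx orbT.
by rewrite le_min andbC ge_min lexx orbT; apply: lb_le_inf; first by exists (A i t).
Qed.

Lemma cvg_at_right_linear_bound (f : R -> R) (t c : R) :
  (forall x, t < x -> f t <= f x <= f t + c * (x - t)) ->
  f x @[x --> t^'+] --> f t.
Proof.
move=> f_bd; apply: (@squeeze_cvgr _ _ _ _ (fun=> f t) (fun x => f t + c * (x - t))).
- by near=> x; apply: f_bd; near: x; exact: nbhs_right_gt.
- exact: cvg_cst.
have : (fun x => f t + c * (x - t)) x @[x --> t] --> f t + c * (t - t).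
  apply: (@cvgD _ R^o _ _ _ (fun=> f t) (fun x => c * (x - t))); first exact: cvg_cst.
  apply: (@cvgM _ _ _ _ (fun=> c) (fun x => x - t)); first exact: cvg_cst.
  by apply: (@cvgB _ R^o _ _ _ id (fun=> t)); [exact: cvg_id | exact: cvg_cst].
by rewrite subrr mulr0 addr0 => /cvg_at_right_filter.
Unshelve. all: by end_near.
Qed.

Lemma nondecr_cadlag (f : R -> R) : nondecr_Rp f ->
  (forall t, 0 <= t -> exists c, forall x, t < x -> f x <= f t + c * (x - t)) ->
  cadlag_Rp f.
Proof.
move=> f_nd f_rbd t t_ge0; split.
  have [c f_c] := f_rbd t t_ge0; apply: cvg_at_right_linear_bound => x tx.
  by apply/andP; split; [apply: f_nd (ltW tx); exact: le_trans t_ge0 _ | exact: f_c].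
move=> t_gt0; have x_gt0 : \forall x \near t^'-, 0 < x by exact: nbhs_left_gt.
apply: nondecreasing_at_left_is_cvgr.
- near=> x => u v; rewrite !in_itv /= => /andP[xu _] _.
  by apply: f_nd; apply: ltW (lt_trans _ xu); near: x.
- near=> x; exists (f t) => z [y]; rewrite /= in_itv /= => /andP[xy yt] <-.
  by apply: f_nd (ltW yt); apply: ltW (lt_trans _ xy); near: x.
Unshelve. all: by end_near.
Qed.

Section LinearNetwork.
Variables (K : nat) (P : 'M[R]_K) (mu lambda N : 'I_K -> R).
Hypotheses (P_sub : substochastic P) (rhoP1 : spectral_radius P < 1)
  (mu_ge0 : forall i, 0 <= mu i) (lambda_ge0 : forall i, 0 <= lambda i)
  (N_ge0 : forall i, 0 <= N i).

Let P_ge0 i j : 0 <= P i j. Proof. by case: P_sub. Qed.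

Definition arrival (t : R) : 'I_K -> R :=
  xsol (fun j => mu j * t) P (fun j => N j + lambda j * t).

Lemma arrival_eqn t : 0 <= t ->
  x_eqn (fun j => mu j * t) P (fun j => N j + lambda j * t) (arrival t).
Proof.
by move=> t_ge0; apply: xsolP => // i; [rewrite mulr_ge0 | rewrite addr_ge0 ?mulr_ge0].
Qed.

Lemma arrival_ge0 t i : 0 <= t -> 0 <= arrival t i.
Proof. by move=> /arrival_eqn[]. Qed.

Lemma arrival_fix t i : 0 <= t ->
  arrival t i = N i + lambda i * t + \sum_j P j i * Num.min (arrival t j) (mu j * t).
Proof. by move=> /arrival_eqn[_ ->]. Qed.

Lemma arrival0 i : arrival 0 i = N i.
Proof.
rewrite arrival_fix // mulr0 addr0 big1 ?addr0 // => j _.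
by rewrite mulr0 min_r ?mulr0 ?arrival_ge0.
Qed.

Lemma arrival_mono s t i : 0 <= s -> s <= t -> arrival s i <= arrival t i.
Proof.
move=> s_ge0 st; have t_ge0 := le_trans s_ge0 st.
have [_ eq_s] := arrival_eqn s_ge0; have [_ eq_t] := arrival_eqn t_ge0.
apply: (x_eqn_sub_le (a := fun j => N j + lambda j * s) (y := fun j => mu j * s)
  P_sub rhoP1 _ _ _ eq_t) => k /=.
- by rewrite lerD2l ler_wpM2l.
- by rewrite ler_wpM2l.
- by rewrite -eq_s.
Qed.

(* (s/t) x(t) is a subsolution at time s, because min is positively homogeneous. *)
Lemma arrival_sublinear s t i : 0 < s -> s <= t -> s * arrival t i <= t * arrival s i.
Proof.
move=> s_gt0 st; have t_gt0 := lt_le_trans s_gt0 st.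
pose c := s / t.
have c_ge0 : 0 <= c by rewrite divr_ge0 // ltW.
have c_le1 : c <= 1 by rewrite ler_pdivrMr // mul1r.
have ct : c * t = s by rewrite /c divfK // gt_eqF.
have [_ eq_t] := arrival_eqn (ltW t_gt0); have [_ eq_s] := arrival_eqn (ltW s_gt0).
have : c * arrival t i <= arrival s i.
  apply: (x_eqn_sub_le (x := fun j => c * arrival t j) P_sub rhoP1 (fun _ => lexx _)
    (fun _ => lexx _) _ eq_s) => k.
  rewrite eq_t mulrDr mulrDr; apply: lerD; first apply: lerD.
  - by rewrite -[leRHS]mul1r ler_wpM2r.
  - by rewrite mulrCA ct.
  rewrite mulr_sumr; apply: ler_sum => j _; rewrite mulrCA minr_pMr //.
  by rewrite (mulrCA c) ct.
by rewrite -(ler_pM2l t_gt0) mulrA mulrCA divff ?gt_eqF // mulr1 [_ * arrival s i]mulrC.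
Qed.

Lemma arrival_right_bound t i : 0 <= t ->
  exists c, forall x, t < x -> arrival x i <= arrival t i + c * (x - t).
Proof.
rewrite le_eqVlt => /predU1P[<-|t_gt0].
  exists (lambda i + \sum_j P j i * mu j) => x x_gt0; rewrite subr0 arrival0.
  rewrite (arrival_fix _ (ltW x_gt0)) mulrDl addrA lerD2l mulr_suml.
  by apply: ler_sum => j _; rewrite -mulrA ler_wpM2l // ge_min lexx orbT.
exists (arrival t i / t) => x tx.
have -> : arrival t i + arrival t i / t * (x - t) = x * arrival t i / t.
  by field; rewrite gt_eqF.
by rewrite ler_pdivlMr // mulrC arrival_sublinear // ltW.
Qed.

Definition departure (i : 'I_K) (t : R) : R := Num.min (arrival t i) (mu i * t).

Lemma arrival_Gamma i t : 0 <= t ->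
  arrival t i =
    Gamma departure (fun i j t => P i j * t) (fun i t => N i + lambda i * t) i t.
Proof. exact: arrival_fix. Qed.

Lemma departure_ge0 i t : 0 <= t -> 0 <= departure i t.
Proof. by move=> t_ge0; rewrite le_min arrival_ge0 // mulr_ge0. Qed.

Lemma departure_mono i s t : 0 <= s -> s <= t -> departure i s <= departure i t.
Proof. by move=> s_ge0 st; apply: le_min2; [exact: arrival_mono | exact: ler_wpM2l]. Qed.

Lemma Dspace_arrival : Dspace (fun i t => arrival t i).
Proof.
move=> i; split; first by move=> t; exact: arrival_ge0.
  by move=> s t; exact: arrival_mono.
by apply: nondecr_cadlag => [s t|t]; [exact: arrival_mono | exact: arrival_right_bound].
Qed.

Lemma D0space_departure : D0space departure.
Proof.
split; last by move=> i; rewrite /departure mulr0 min_r ?arrival_ge0.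
move=> i; split; first by move=> t; exact: departure_ge0.
  by move=> s t; exact: departure_mono.
apply: nondecr_cadlag; first by move=> s t; exact: departure_mono.
move=> t t_ge0; have [c arr_c] := arrival_right_bound i t_ge0.
exists (Num.max c (mu i)) => x tx; have xt_ge0 : 0 <= x - t by rewrite subr_ge0 ltW.
apply: le_trans (min_le_addr (arr_c x tx) (_ : mu i * x <= mu i * t + mu i * (x - t))) _.
  by rewrite -mulrDr addrCA subrr addr0.
by rewrite lerD2l ge_max !ler_wpM2r // le_max lexx ?orbT.
Qed.

Lemma departure_Phi i t : 0 <= t ->
  departure i t = Phi (fun i t => arrival t i) (fun i t => mu i * t) i t.
Proof.
move=> t_ge0; rewrite Phi_linear_service //.
- by move=> s /andP[s_ge0 _]; exact: arrival_ge0.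
- by move=> s /andP[s_gt0 st]; exact: arrival_sublinear.
Qed.

Lemma solution_departure_eq (A D : 'I_K -> R -> R) : Dspace A -> D0space D ->
  (forall i t, 0 <= t ->
    A i t = Gamma D (fun i j t => P i j * t) (fun i t => N i + lambda i * t) i t /\
    D i t = Phi A (fun i t => mu i * t) i t) ->
  forall i T, 0 <= T -> D i T = departure i T.
Proof.
move=> A_D [D_D _] AD_eq i0 T T_ge0.
pose I := [set s : R | 0 <= s <= T].
have I_T : I T by rewrite /I /= T_ge0 lexx.
(* e j is the sup-distance on [0, T]; it is subinvariant for P, hence zero *)
pose e j := sup [set `|D j s - departure j s| | s in I].
have e_ub j s : I s -> `|D j s - departure j s| <= e j.
  move=> Is; apply: ub_le_sup; last by exists s.
  exists (D j T + departure j T) => _ [r /andP[r_ge0 rT] <-].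
  have [D_ge0 D_nd _] := D_D j.
  have := D_ge0 r r_ge0; have := D_nd r T r_ge0 rT.
  have := departure_ge0 j r_ge0; have := departure_mono j r_ge0 rT.
  by rewrite ler_norml; move=> *; apply/andP; split; lra.
have e_ge0 j : 0 <= e j := le_trans (normr_ge0 _) (e_ub j T I_T).
have A_dist i s : I s -> `|A i s - arrival s i| <= \sum_j P j i * e j.
  move=> Is; have /andP[s_ge0 _] := Is.
  rewrite (proj1 (AD_eq i s s_ge0)) arrival_Gamma //.
  by apply: dist_Gamma_linear_le => // j; exact: e_ub.
have D_dist i s : I s -> `|D i s - departure i s| <= \sum_j P j i * e j.
  move=> /andP[s_ge0 sT]; rewrite (proj2 (AD_eq i s s_ge0)) departure_Phi //.
  apply: dist_Phi_le => // r /andP[r_ge0 rs].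
  - by rewrite ler_wpM2l.
  - by have [A_ge0 _ _] := A_D i; exact: A_ge0.
  - exact: arrival_ge0.
  - by apply: A_dist; rewrite /I /= r_ge0 (le_trans rs sT).
have e_le j : e j <= \sum_k P k j * e k.
  apply: ge_sup; first by exists `|D j T - departure j T|, T.
  by move=> _ [s Is <-]; exact: D_dist.
have e0 : e i0 = 0 by rewrite (subinvariant_eq0 P_sub rhoP1 e_ge0 e_le).
by have := e_ub i0 T I_T; rewrite e0 normr_le0 subr_eq0 => /eqP.
Qed.

End LinearNetwork.

Theorem mainTheorem3 (K : nat) (P : 'M[R]_K) (mu lambda N : 'I_K -> R) :
  substochastic P -> spectral_radius P < 1 ->
  (forall i, 0 <= mu i) -> (forall i, 0 <= lambda i) -> (forall i, 0 <= N i) ->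
  let Nf := fun (i : 'I_K) (t : R) => N i + lambda i * t in
  let Sf := fun (i : 'I_K) (t : R) => mu i * t in
  let Pf := fun (i j : 'I_K) (t : R) => P i j * t in
  let is_sol := fun A D : 'I_K -> R -> R =>
    [/\ Dspace A, D0space D &
        forall i (t : R), 0 <= t ->
          A i t = Gamma D Pf Nf i t /\ D i t = Phi A Sf i t] in
  (exists A D, is_sol A D) /\
  (forall A D, is_sol A D ->
     forall i (t : R), 0 <= t ->
       A i t = xsol (fun j => mu j * t) P (fun j => N j + lambda j * t) i /\
       D i t = Num.min (A i t) (mu i * t)).
Proof.
move=> P_sub rhoP1 mu_ge0 lambda_ge0 N_ge0 Nf Sf Pf is_sol.
have arrival_Gamma_t := arrival_Gamma P_sub mu_ge0 lambda_ge0 N_ge0.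
split.
  exists (fun i t => arrival P mu lambda N t i), (departure P mu lambda N); split.
  - exact: (Dspace_arrival P_sub rhoP1 mu_ge0 lambda_ge0 N_ge0).
  - exact: (D0space_departure P_sub rhoP1 mu_ge0 lambda_ge0 N_ge0).
  - move=> i t t_ge0; split; first exact: arrival_Gamma_t.
    exact: (departure_Phi P_sub rhoP1 mu_ge0 lambda_ge0 N_ge0).
move=> A D [A_D D_D AD_eq] i t t_ge0.
have D_eq j : D j t = departure P mu lambda N j t.
  exact: (solution_departure_eq P_sub rhoP1 mu_ge0 lambda_ge0 N_ge0 A_D D_D AD_eq).
have A_eq : A i t = arrival P mu lambda N t i.
  rewrite (proj1 (AD_eq i t t_ge0)) (arrival_Gamma_t i t t_ge0) /Gamma.
  by under eq_bigr do rewrite D_eq.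
by rewrite A_eq D_eq.
Qed.
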